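(* Let $C\subseteq\{0,1\}^n$ with $|C|=2^{Rn}$, let $\Pi=\{A_i\}_{i\in\{0,1\}^{R'n}}$ be a partition of $C$ into $2^{R'n}$ sets of size $2^{\ell}$ with $R'n=Rn-\ell$, and let $C_\Pi$ be the stochastic code that encodes message $i$ as a uniformly random element of $A_i$. Let $L\ge1$. If for every view $V\in\{0,1,?\}^n$ with exactly $\rho_r n$ non-$?$ coordinates and every message index $i$, \[\#\{x\in A_i : x\text{ is consistent with }V\}<L,\] then the equivocation of $C_\Pi$ satisfies $\Delta\ge Rn-\rho_r n-\log_2 L$.
   Context: A codeword $x$ is consistent with a view $V=(v_1,\dots,v_n)\in\{0,1,?\}^n$ if $x_i=v_i$ whenever $v_i\ne ?$. With $\mathbf S$ the uniformly random message, $\mathbf X$ its (random) encoding, and for $\mathscr S\subseteq[n]$ of size $\rho_r n$, $\mathbf V(\mathscr S)$ the string equal to $\mathbf X$ on $\mathscr S$ and $?$ elsewhere, the equivocation is $\Delta=\min_{|\mathscr S|=\rho_r n}H(\mathbf S\mid\mathbf V(\mathscr S))$. *)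

From mathcomp Require Import all_boot.
From Stdlib Require Import Reals.
Set Implicit Arguments. Unset Strict Implicit. Unset Printing Implicit Defensive.

Definition word (n : nat) := {ffun 'I_n -> bool}.
(* views V in {0,1,?}^n ; None encodes "?" *)
Definition view_t (n : nat) := {ffun 'I_n -> option bool}.

Definition consistent n (x : word n) (V : view_t n) : bool :=
  [forall j, if V j is Some b then x j == b else true].

Definition nrevealed n (V : view_t n) : nat := #|[set j | V j != None]|.

Definition viewOn n (S : {set 'I_n}) (x : word n) : view_t n :=
  [ffun j => if j \in S then Some (x j) else None].

Definition log2 (x : R) : R := (ln x / ln 2)%R.

Definition rsum (T : finType) (P : pred T) (F : T -> R) : R :=
  \big[Rplus/0%R]_(t | P t) F t.

(* Stochastic code C_Pi: message i uniform over the message set M,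
   encoded as a uniformly random element of A i.
   Joint probability P(S = i, V(S) = v). *)
Definition jointP n (M : finType) (A : M -> {set word n}) (S : {set 'I_n})
  (i : M) (v : view_t n) : R :=
  rsum (fun x => (x \in A i) && (viewOn S x == v))
       (fun _ => (/ (INR #|M| * INR #|A i|))%R).

Definition viewP n (M : finType) (A : M -> {set word n}) (S : {set 'I_n})
  (v : view_t n) : R :=
  rsum predT (fun i => jointP A S i v).

Definition condEntropy n (M : finType) (A : M -> {set word n})
  (S : {set 'I_n}) : R :=
  rsum predT (fun i : M => rsum predT (fun v : view_t n =>
    let p := jointP A S i v in
    if Rlt_dec 0 p then (- p * log2 (p / viewP A S v))%R else 0%R)).

(* A pair (message i, view v) in the support of the joint law has
   probability #{x in A_i consistent with v} / 2^(Rn) < L / 2^(Rn), so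
   -log2 P(i, v) > Rn - log2 L there, and
   H(S | V) = E[-log2 P(S, V)] - H(V) >= Rn - log2 L - H(V).  A view reveals
   rho_r n bits, so it takes at most 2^(rho_r n) values and H(V) <= rho_r n. *)
From HB Require Import structures.
From mathcomp Require Import all_boot.
From Stdlib Require Import Reals Lra.

HB.instance Definition _ := Monoid.isComLaw.Build R 0%R Rplus
  (fun x y z => esym (Rplus_assoc x y z)) Rplus_comm Rplus_0_l.

Lemma expnNat m e : expn m e = Nat.pow m e.
Proof. by elim: e => //= e IH; rewrite expnS IH. Qed.

Section RealSums.
Local Open Scope R_scope.
Context {T : finType}.
Implicit Types (P : pred T) (F G : T -> R).

Lemma rsum_const P c : rsum P (fun _ => c) = INR #|P| * c.
Proof.
rewrite /rsum big_const; elim: #|P| => [|m IH]; first by rewrite /=; ring.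
by rewrite [iter _ _ _]/= IH S_INR; ring.
Qed.

Lemma rsum_ext P F G : (forall t, P t -> F t = G t) -> rsum P F = rsum P G.
Proof. exact: eq_bigr. Qed.

Lemma rsum_le P F G : (forall t, P t -> F t <= G t) -> rsum P F <= rsum P G.
Proof. by move=> FG; rewrite /rsum; elim/big_ind2: _ => // *; lra. Qed.

Lemma rsum_ge0 P F : (forall t, P t -> 0 <= F t) -> 0 <= rsum P F.
Proof. by move=> F0; rewrite /rsum; elim/big_ind: _ => // *; lra. Qed.

Lemma rsumD P F G : rsum P (fun t => F t + G t) = rsum P F + rsum P G.
Proof. exact: big_split. Qed.

Lemma rsumMr P F c : rsum P (fun t => F t * c) = rsum P F * c.
Proof. by rewrite /rsum; elim/big_rec2: _ => [|t x y _ ->]; ring. Qed.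

Lemma rsum_exchange (U : finType) (F : T -> U -> R) :
  rsum predT (fun t => rsum predT (F t)) =
  rsum predT (fun u => rsum predT (fun t => F t u)).
Proof. exact: exchange_big. Qed.

Lemma rsum_supp (D : {set T}) F :
  (forall t, t \notin D -> F t = 0) -> rsum predT F = rsum (mem D) F.
Proof.
by move=> F0; rewrite /rsum (bigID (mem D)) /= [X in _ + X]big1 ?Rplus_0_r.
Qed.

Lemma rsum_ge_term P F t :
  (forall u, P u -> 0 <= F u) -> P t -> F t <= rsum P F.
Proof.
move=> F0 Pt; rewrite /rsum (bigD1 t) //=.
have : 0 <= rsum (fun u => P u && (u != t)) F.
  by apply: rsum_ge0 => u /andP[Pu _]; apply: F0.
rewrite /rsum; lra.
Qed.

End RealSums.

Section LogEntropy.
Local Open Scope R_scope.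

Lemma ln2_gt0 : 0 < ln 2.
Proof. have := ln_lt_2; lra. Qed.

Lemma log2_div x y : 0 < x -> 0 < y -> log2 (x / y) = log2 x - log2 y.
Proof.
move=> x0 y0; rewrite /log2 ln_mult ?ln_Rinv //; last exact: Rinv_0_lt_compat.
by rewrite /Rdiv; ring.
Qed.

Lemma log2_pow2 k : log2 (2 ^ k) = INR k.
Proof. by rewrite /log2 ln_pow; [field; have := ln2_gt0; lra | lra]. Qed.

Lemma log2_lt x y : 0 < x -> x < y -> log2 x < log2 y.
Proof.
move=> x0 xy; apply: Rmult_lt_compat_r; last exact: ln_increasing.
exact/Rinv_0_lt_compat/ln2_gt0.
Qed.

(* [ln y <= y - 1] at [y = c / q], multiplied by [q]. *)
Lemma mul_ln_ge q c : 0 < c -> 0 <= q -> q * ln c + q - c <= q * ln q.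
Proof.
move=> c0 q0; case: (Rle_lt_or_eq_dec _ _ q0) => [{}q0|<-]; last lra.
have cq_gt0 : 0 < c / q by apply: Rdiv_lt_0_compat.
have := exp_ineq1_le (ln (c / q)); rewrite exp_ln // /Rdiv ln_mult ?ln_Rinv //;
  last exact: Rinv_0_lt_compat.
move=> ln_le; have := Rmult_le_compat_l q _ _ (Rlt_le _ _ q0) ln_le.
have -> : q * (c * / q) = c by field; lra.
lra.
Qed.

(* [ln] is [0] on nonpositive arguments, so this follows the convention
   [0 log 0 = 0]. *)
Definition entropy {T : finType} (Q : T -> R) : R :=
  - rsum predT (fun t => Q t * log2 (Q t)).

Lemma entropy_le_log_card {T : finType} {Q : T -> R} {D : {set T}} {r : nat} :
  (forall t, 0 <= Q t) -> rsum predT Q = 1 ->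
  (forall t, t \notin D -> Q t = 0) -> leq #|D| (expn 2 r) ->
  entropy Q <= INR r.
Proof.
move=> Q0 Q1 QD cardD; rewrite /entropy.
set c := / 2 ^ r.
have pow_gt0 : 0 < 2 ^ r by apply: pow_lt; lra.
have c_gt0 : 0 < c by apply: Rinv_0_lt_compat.
have QD1 : rsum (mem D) Q = 1 by rewrite -(rsum_supp D Q QD).
have cardDc : INR #|D| * c <= 1.
  rewrite -(Rinv_r (2 ^ r)); last lra.
  apply: Rmult_le_compat_r; first lra.
  by rewrite -(pow_INR 2) -expnNat; apply/le_INR/leP.
have lnc : ln c = - INR r * ln 2 by rewrite ln_Rinv // ln_pow; lra.
have sum_mul_ln_ge :
    ln c + 1 - INR #|D| * c <= rsum (mem D) (fun t => Q t * ln (Q t)).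
  have -> : ln c + 1 - INR #|D| * c =
            rsum (mem D) (fun t => Q t * ln c + (Q t + - c)).
    by rewrite !rsumD rsumMr rsum_const QD1 (@eq_card _ _ D); [ring|].
  by apply: rsum_le => t _; have := mul_ln_ge _ _ c_gt0 (Q0 t); lra.
rewrite (rsum_supp D); last by move=> t /QD ->; ring.
rewrite (rsum_ext _ _ (fun t => Q t * ln (Q t) * / ln 2)); last first.
  by move=> t _; rewrite /log2 /Rdiv; ring.
have ln2 := ln2_gt0.
have -> : INR r = - (- INR r * ln 2) * / ln 2 by field; lra.
rewrite rsumMr Ropp_mult_distr_l; apply: Rmult_le_compat_r; last lra.
exact/Rlt_le/Rinv_0_lt_compat.
Qed.

End LogEntropy.

Lemma card_views {n} (S : {set 'I_n}) :
  leq #|[set viewOn S x | x in [set: word n]]| (expn 2 #|S|).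
Proof.
set g := fun v : view_t n => [ffun j : 'I_#|S| => odflt false (v (enum_val j))].
rewrite -(card_in_imset (f := g)).
  by apply: (leq_trans (max_card _)); rewrite card_ffun card_bool card_ord.
move=> _ _ /imsetP[x1 _ ->] /imsetP[x2 _ ->] E.
apply/ffunP => j; rewrite !ffunE; case: (boolP (j \in S)) => jS //.
have := congr1 (fun f : {ffun 'I_#|S| -> bool} => f (enum_rank_in jS j)) E.
by rewrite /g /= !ffunE (enum_rankK_in jS jS) jS /= => ->.
Qed.

Lemma consistent_viewOn {n} (S : {set 'I_n}) (x y : word n) :
  consistent x (viewOn S y) = (viewOn S x == viewOn S y).
Proof.
apply/forallP/eqP => [xy | E j].
  apply/ffunP => j; have := xy j; rewrite !ffunE.
  by case: (j \in S) => // /eqP ->.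
have := congr1 (fun f : view_t n => f j) E; rewrite /= !ffunE.
by case: (j \in S) => // [[->]].
Qed.

Lemma nrevealed_viewOn {n} (S : {set 'I_n}) (y : word n) :
  nrevealed (viewOn S y) = #|S|.
Proof. by apply: eq_card => j; rewrite inE ffunE; case: (j \in S). Qed.

Section StochasticCode.
Local Open Scope R_scope.
Context {n : nat} {M : finType} (A : M -> {set word n}) (S : {set 'I_n}).
Hypothesis card_M_neq0 : #|M| <> 0%nat.
Hypothesis card_A_neq0 : forall i, #|A i| <> 0%nat.

Let P := jointP A S.
Let Q := viewP A S.
Let cell i v := [set x in A i | viewOn S x == v].

Let card_MA_gt0 i : 0 < INR #|M| * INR #|A i|.
Proof. by apply: Rmult_lt_0_compat; apply/lt_0_INR/Nat.neq_0_lt_0. Qed.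

Lemma jointPE i v : P i v = INR #|cell i v| * / (INR #|M| * INR #|A i|).
Proof.
rewrite /P /jointP rsum_const; congr (INR _ * _).
by apply: eq_card => x; rewrite inE.
Qed.

Lemma jointP_ge0 i v : 0 <= P i v.
Proof.
rewrite jointPE; apply: Rmult_le_pos; first exact: pos_INR.
exact/Rlt_le/Rinv_0_lt_compat.
Qed.

Lemma jointP_le_viewP i v : P i v <= Q v.
Proof.
by apply: (rsum_ge_term _ (fun j => P j v)) => // j _; apply: jointP_ge0.
Qed.

Lemma viewP_ge0 v : 0 <= Q v.
Proof. by apply: rsum_ge0 => i _; apply: jointP_ge0. Qed.

Lemma sum_jointP i : rsum predT (P i) = / INR #|M|.
Proof.
rewrite /P /jointP /rsum.
under eq_bigr => v _ do rewrite big_mkcondr /=.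
rewrite exchange_big /=.
under eq_bigr => x _ do
  rewrite -big_mkcond (big_pred1 (viewOn S x)) //= 1?eq_sym //.
rewrite -/(rsum _ _) rsum_const (eq_card (B := A i)) //.
by field; split; apply: not_0_INR.
Qed.

Lemma viewP_sum1 : rsum predT Q = 1.
Proof.
rewrite /Q /viewP rsum_exchange (rsum_ext _ _ (fun _ => / INR #|M|));
  last by move=> i _; apply: sum_jointP.
by rewrite rsum_const cardT -cardE; field; apply: not_0_INR.
Qed.

Lemma viewP_eq0 v : v \notin [set viewOn S x | x in [set: word n]] -> Q v = 0.
Proof.
move=> vNview; rewrite /Q /viewP /rsum big1 // => i _; rewrite -/P jointPE.
suff -> : #|cell i v| = 0%nat by rewrite Rmult_0_l.
apply/eqP; rewrite cards_eq0; apply/eqP/setP => x; rewrite !inE.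
apply/negP => /andP[_ /eqP xv]; case/negP: vNview; rewrite -xv.
exact: imset_f.
Qed.

Lemma entropy_viewP_le : entropy Q <= INR #|S|.
Proof.
exact: (entropy_le_log_card viewP_ge0 viewP_sum1 viewP_eq0 (card_views S)).
Qed.

Lemma jointP_lt L :
  (forall (V : view_t n) i, nrevealed V = #|S| ->
     INR #|[set x in A i | consistent x V]| < L) ->
  forall i v, 0 < P i v -> P i v < L / (INR #|M| * INR #|A i|).
Proof.
move=> few_consistent i v; rewrite jointPE /Rdiv => P_gt0.
have [x] : exists x, x \in cell i v.
  apply/set0Pn/eqP => cell0; move: P_gt0; rewrite cell0 cards0 /= Rmult_0_l.
  exact: Rlt_irrefl.
rewrite inE => /andP[_ /eqP <-].
apply: Rmult_lt_compat_r; first exact/Rinv_0_lt_compat.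
have := few_consistent (viewOn S x) i (nrevealed_viewOn S x).
rewrite (eq_card (B := cell i (viewOn S x))) // => y.
by rewrite !inE consistent_viewOn.
Qed.

Lemma condEntropy_ge b :
  (forall i v, 0 < P i v -> log2 (P i v) <= - b) ->
  b - entropy Q <= condEntropy A S.
Proof.
move=> P_small.
have termwise i v : P i v * (b + log2 (Q v)) <=
    (if Rlt_dec 0 (P i v) then - P i v * log2 (P i v / Q v) else 0).
  case: Rlt_dec => [P_gt0 | /Rnot_lt_le P_le0] /=; last first.
    have -> : P i v = 0 by have := jointP_ge0 i v; lra.
    by rewrite Rmult_0_l; lra.
  have Q_gt0 : 0 < Q v := Rlt_le_trans _ _ _ P_gt0 (jointP_le_viewP i v).
  rewrite log2_div //; have := P_small i v P_gt0; nra.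
apply: Rle_trans (_ : rsum predT (fun i => rsum predT (fun v =>
    P i v * (b + log2 (Q v)))) <= _); last first.
  by apply: rsum_le => i _; apply: rsum_le => v _; apply: termwise.
rewrite rsum_exchange (rsum_ext _ _ (fun v => Q v * b + Q v * log2 (Q v))).
  by rewrite rsumD rsumMr viewP_sum1 /entropy; lra.
by move=> v _; rewrite rsumMr; change (rsum predT _) with (Q v); ring.
Qed.

End StochasticCode.

Theorem corollary4p2 (n k l r : nat) (C : {set word n})
  (A : {ffun 'I_(k - l) -> bool} -> {set word n}) (L : R) :
  (l <= k)%N ->
  #|C| = 2 ^ k ->
  (forall i, A i \subset C) ->
  (forall i j, i <> j -> [disjoint A i & A j]) ->
  (forall x, x \in C -> exists i, x \in A i) ->
  (forall i, #|A i| = 2 ^ l) ->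
  (1 <= L)%R ->
  (forall (V : view_t n) i, nrevealed V = r ->
     (INR #|[set x in A i | consistent x V]| < L)%R) ->
  forall S : {set 'I_n}, #|S| = r ->
    (INR k - INR r - log2 L <= condEntropy A S)%R.
Proof.
move=> l_le_k _ _ _ _ cardA L_ge1 few_consistent S cardS.
have card_M : #|{ffun 'I_(k - l) -> bool}| = 2 ^ (k - l).
  by rewrite card_ffun card_bool card_ord expnNat.
have cardMA i : (INR #|{ffun 'I_(k - l) -> bool}| * INR #|A i| = 2 ^ k)%R.
  have sub_add : Nat.add (k - l) l = k by apply: subnK.
  by rewrite card_M cardA !pow_INR -pow_add sub_add; congr pow; simpl; ring.
have card_M_neq0 : #|{ffun 'I_(k - l) -> bool}| <> 0%nat.
  by rewrite card_M; apply: Nat.pow_nonzero.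
have card_A_neq0 i : #|A i| <> 0%nat by rewrite cardA; apply: Nat.pow_nonzero.
apply: Rle_trans
  (condEntropy_ge A S card_M_neq0 card_A_neq0 (INR k - log2 L) _).
  by have := entropy_viewP_le A S card_M_neq0 card_A_neq0; rewrite cardS; lra.
move=> i v P_gt0.
have := jointP_lt A S card_M_neq0 card_A_neq0; rewrite cardS.
move=> /(_ L few_consistent i v P_gt0).
rewrite cardMA => /(log2_lt _ _ P_gt0).
rewrite log2_div ?log2_pow2; [lra | lra | apply: pow_lt; lra].
Qed.
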